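(* For $\epsilon\in\mathbb{C}$, the Poisson bracket $\Psi(\Pi_0+\epsilon\Pi_\infty)$ on $V=\mathrm{Mat}_{k\times k}(\mathbb{C})\oplus\mathrm{Mat}_{k\times k}(\mathbb{C})$, where $\Pi_0=[xx^*,x^*]+[yx^*,y^*]$ and $\Pi_\infty=[yy^*,yxx^*+y^2y^*]$, is generically nondegenerate, and the corresponding symplectic form is $\mathrm{tr}\,d(Y^{-1}-\epsilon X)^{-1}\wedge d\big(X(Y^{-1}-\epsilon X)\big)$.
   Context: $Q$ is the quiver with one vertex and two loops $x,y$; $\mathbb{C}\bar Q=\mathbb{C}\langle x,y,x^*,y^*\rangle$, graded by the number of starred letters. $\mathcal{V}Q$ is the quotient of $\mathbb{C}\bar Q$ by the span of $PR-(-1)^{pr}RP$ for $P,R$ homogeneous of degrees $p,r$; $[u,v]=uv-vu$. $\mathrm{Rep}(Q,k)=V$, with the point $(X,Y)$ assigning $X$ to $x$ and $Y$ to $y$. Cotangent vectors at $(X,Y)$ are pairs $(A,B)$ paired with tangent vectors $(U,W)$ by $\mathrm{tr}(AU+BW)$. For a monomial $P=P_1a_1^*P_2\cdots P_ra_r^*P_{r+1}$ ($P_i$ monomials in $x,y$, $a_i\in\{x,y\}$), $\Psi(P)$ is the $r$-vector field on $V$ obtained by restricting to alternating tensors the form $(C^1,\dots,C^r)\mapsto\mathrm{tr}\big(P_1(X,Y)C^1_{a_1}P_2(X,Y)\cdots C^r_{a_r}P_{r+1}(X,Y)\big)$, with $C^j_x=A^j$, $C^j_y=B^j$ for $C^j=(A^j,B^j)$;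 $\Psi$ extends linearly and descends to $\mathcal{V}Q$. A generically nondegenerate Poisson bivector determines a symplectic form (its inverse) on its nondegeneracy locus. *)

From mathcomp Require Import all_boot all_algebra.
From mathcomp Require Import complex.
From mathcomp Require Import Rstruct.

Set Implicit Arguments.
Unset Strict Implicit.
Unset Printing Implicit Defensive.
Import GRing.Theory.
Local Open Scope ring_scope.

Definition C : fieldType := (Rdefinitions.R)[i].

(* The free algebra  C<x, y, x*, y*>  = C \bar Q  for the quiver with *)
(* one vertex and two loops x, y, as formal linear combinations of   *)
(* words.                                                            *)
Inductive letter := Lx | Ly | Lxs | Lys.
Definition word := seq letter.
Definition ncpoly := seq (C * word).

Definition ncadd (p q : ncpoly) : ncpoly := p ++ q.
Definition ncscale (c : C) (p : ncpoly) : ncpoly :=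
  [seq (c * t.1, t.2) | t <- p].
Definition ncopp (p : ncpoly) : ncpoly := ncscale (-1) p.
Definition ncmul (p q : ncpoly) : ncpoly :=
  [seq (a.1 * b.1, a.2 ++ b.2) | a <- p, b <- q].
Definition nccomm (u v : ncpoly) : ncpoly :=
  ncadd (ncmul u v) (ncopp (ncmul v u)).

Definition gen (l : letter) : ncpoly := [:: (1, [:: l])].
Definition nx := gen Lx.
Definition ny := gen Ly.
Definition nxs := gen Lxs.
Definition nys := gen Lys.

Definition Pi0 : ncpoly :=
  ncadd (nccomm (ncmul nx nxs) nxs) (nccomm (ncmul ny nxs) nys).

Definition Pi_inf : ncpoly :=
  nccomm (ncmul ny nys)
         (ncadd (ncmul ny (ncmul nx nxs)) (ncmul (ncmul ny ny) nys)).

(* Rep(Q,k) = V = Mat_k(C) + Mat_k(C); a point is (X, Y), a tangent  *)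
(* vector is (U, W), a cotangent vector is (A, B), paired with       *)
(* tangent vectors via tr(A U + B W).                                *)
Section Rep.
Variable k : nat.
Notation M := 'M[C]_k.

Definition pairing (a u : M * M) : C := \tr (a.1 *m u.1 + a.2 *m u.2).

(* Evaluate a word at the point (X,Y), substituting the successive     *)
(* covectors of cs for the successive starred letters:                 *)
(* C^j_x = A^j, C^j_y = B^j.                                            *)
Fixpoint eval_word (X Y : M) (cs : seq (M * M)) (w : word) : M :=
  match w with
  | [::] => 1%:M
  | Lx :: w' => X *m eval_word X Y cs w'
  | Ly :: w' => Y *m eval_word X Y cs w'
  | Lxs :: w' => (head (0, 0) cs).1 *m eval_word X Y (behead cs) w'
  | Lys :: w' => (head (0, 0) cs).2 *m eval_word X Y (behead cs) w'
  end.

(* The bilinear form (C^1, C^2) |-> tr(P_1 C^1_{a_1} P_2 C^2_{a_2} P_3), *)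
(* extended linearly (for P homogeneous of degree 2).                     *)
Definition psi_form2 (P : ncpoly) (X Y : M) (a b : M * M) : C :=
  \sum_(t <- P) t.1 * \tr (eval_word X Y [:: a; b] t.2).

(* Psi(P): the bivector obtained by restricting the form to alternating *)
(* tensors, a /\ b = (a (x) b - b (x) a) / 2.                            *)
Definition Psi2 (P : ncpoly) (X Y : M) (a b : M * M) : C :=
  (psi_form2 P X Y a b - psi_form2 P X Y b a) / 2%:R.

Definition bivector_nondegenerate (pi : M * M -> M * M -> C) : Prop :=
  forall a : M * M, (forall b, pi a b = 0) -> a = (0, 0).

(* omega (a 2-form on tangent vectors) is the inverse of pi:          *)
(* viewing pi as pi^# : T^* -> T, a |-> pi(a, .), and omega as          *)
(* omega^b : T -> T^*, u |-> omega(u, .), we have omega^b o pi^# = id.  *)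
Definition inverse_form (pi : M * M -> M * M -> C)
    (omega : M * M -> M * M -> C) : Prop :=
  forall (a u : M * M),
    (forall g : M * M, pairing g u = pi a g) ->
    forall v : M * M, omega u v = pairing a v.

Definition dinv (S dS : M) : M := - (invmx S *m dS *m invmx S).

(* The 2-form  tr d(Y^{-1} - eps X)^{-1} /\ d(X (Y^{-1} - eps X))     *)
(* at the point (X,Y), evaluated on tangent vectors u = (U, W), v.     *)
(* (dF /\ dG)(u, v) = dF(u) dG(v) - dF(v) dG(u).                      *)
Definition dS (eps : C) (X Y : M) (u : M * M) : M :=
  dinv Y u.2 - eps *: u.1.
Definition dF (eps : C) (X Y : M) (u : M * M) : M :=
  dinv (invmx Y - eps *: X) (dS eps X Y u).
Definition dG (eps : C) (X Y : M) (u : M * M) : M :=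
  u.1 *m (invmx Y - eps *: X) + X *m dS eps X Y u.

Definition omega_eps (eps : C) (X Y : M) (u v : M * M) : C :=
  \tr (dF eps X Y u *m dG eps X Y v) - \tr (dF eps X Y v *m dG eps X Y u).

End Rep.

(* Pairing a covector a = (A, B) with the bivector Psi(Pi_0 + eps Pi_oo) gives the linear form
   g |-> tr(g.1 U + g.2 W) for explicit matrices (U, W) = sharp a, both halves of the
   antisymmetrisation contributing equally since Pi_0 and Pi_oo are sums of commutators.
   Put S = Y^-1 - eps X and R = A - eps Y B Y.  Along sharp a one has dS = -R S, hence
   d(S^-1) = S^-1 R and d(X S) = -(R X + S Y B Y) S, and then cyclicity of the trace gives
   omega(sharp a, v) = tr(A v.1 + B v.2).  So omega inverts sharp: sharp is injective (the
   bivector is nondegenerate) and omega is the corresponding symplectic form. *)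

From Pilot Require Import Defs.
From mathcomp Require Import all_boot all_algebra.
From mathcomp Require Import complex Rstruct ring.

Set Implicit Arguments.
Unset Strict Implicit.
Unset Printing Implicit Defensive.
Import GRing.Theory.
Local Open Scope ring_scope.

Section TraceForm.
Variables (R : pzRingType) (n : nat).

Lemma mxtraceN (A : 'M[R]_n) : \tr (- A) = - \tr A.
Proof. exact: raddfN. Qed.

Lemma mxtraceB (A B : 'M[R]_n) : \tr (A - B) = \tr A - \tr B.
Proof. exact: raddfB. Qed.

Lemma mxtrace_delta_mull (A : 'M[R]_n) i j : \tr (delta_mx j i *m A) = A i j.
Proof.
rewrite /mxtrace (bigD1 j) //= big1 ?addr0.
  rewrite mxE (bigD1 i) //= big1 ?addr0 ?mxE ?eqxx ?mul1r //.
  by move=> l /negbTE nli; rewrite mxE nli andbF mul0r.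
move=> l /negbTE nlj; rewrite mxE big1 // => m _.
by rewrite mxE nlj mul0r.
Qed.

Lemma mxtrace_mull_inj (A B : 'M[R]_n) :
  (forall G, \tr (G *m A) = \tr (G *m B)) -> A = B.
Proof. by move=> eqAB; apply/matrixP=> i j; rewrite -!mxtrace_delta_mull. Qed.

End TraceForm.

Ltac mx_expand :=
  repeat progress rewrite ?(mulmxDl, mulmxDr, mulmxBl, mulmxBr, mulmxN, mulNmx, mulmxA)
    -?scalemxAl -?scalemxAr.

Ltac mxtrace_expand := rewrite ?(mxtraceD, mxtraceB, mxtraceN, mxtraceZ).

(* Rotates every trace until its last factor is G or H, so that traces equal by cyclicity
   become syntactically equal. *)
Ltac rotate_traces_to_end G H :=
  repeat match goal with
  | |- context [\tr (?P *m ?Q)] =>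
      assert_fails (constr_eq Q G); assert_fails (constr_eq Q H);
      lazymatch P with context [G] => idtac | context [H] => idtac end;
      rewrite [\tr (P *m Q)]mxtrace_mulC ?mulmxA
  end.

(* The constructions of Defs over an arbitrary field F (the theorem only needs 2 to be
   invertible); at F = C they unfold to those of Defs. *)
Module OverField.

Section FreeAlgebra.
Variable F : fieldType.

Definition ncpoly := seq (F * word).
Definition ncadd (p q : ncpoly) : ncpoly := p ++ q.
Definition ncscale (c : F) (p : ncpoly) : ncpoly := [seq (c * t.1, t.2) | t <- p].
Definition ncopp (p : ncpoly) : ncpoly := ncscale (-1) p.
Definition ncmul (p q : ncpoly) : ncpoly :=
  [seq (a.1 * b.1, a.2 ++ b.2) | a <- p, b <- q].
Definition nccomm (u v : ncpoly) : ncpoly := ncadd (ncmul u v) (ncopp (ncmul v u)).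
Definition gen (l : letter) : ncpoly := [:: (1, [:: l])].
Definition nx := gen Lx.
Definition ny := gen Ly.
Definition nxs := gen Lxs.
Definition nys := gen Lys.
Definition Pi0 : ncpoly :=
  ncadd (nccomm (ncmul nx nxs) nxs) (nccomm (ncmul ny nxs) nys).
Definition Pi_inf : ncpoly :=
  nccomm (ncmul ny nys) (ncadd (ncmul ny (ncmul nx nxs)) (ncmul (ncmul ny ny) nys)).

End FreeAlgebra.

Section Rep.
Variables (F : fieldType) (k : nat).
Notation M := 'M[F]_k.

Definition pairing (a u : M * M) : F := \tr (a.1 *m u.1 + a.2 *m u.2).

Lemma pairingC a u : pairing a u = pairing u a.
Proof. by rewrite /pairing !mxtraceD !(mxtrace_mulC a.1) (mxtrace_mulC a.2). Qed.

Lemma pairing0r a : pairing a (0, 0) = 0.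
Proof. by rewrite /pairing !mulmx0 addr0 mxtrace0. Qed.

Lemma pairing_injr u v : (forall g, pairing g u = pairing g v) -> u = v.
Proof.
case: u v => [U1 U2] [V1 V2] /= eq_uv.
congr (_, _); apply: mxtrace_mull_inj => G.
  by have := eq_uv (G, 0); rewrite /pairing /= !mul0mx !addr0.
by have := eq_uv (0, G); rewrite /pairing /= !mul0mx !add0r.
Qed.

Fixpoint eval_word (X Y : M) (cs : seq (M * M)) (w : word) : M :=
  match w with
  | [::] => 1%:M
  | Lx :: w' => X *m eval_word X Y cs w'
  | Ly :: w' => Y *m eval_word X Y cs w'
  | Lxs :: w' => (head (0, 0) cs).1 *m eval_word X Y (behead cs) w'
  | Lys :: w' => (head (0, 0) cs).2 *m eval_word X Y (behead cs) w'
  end.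

Definition psi_form2 (P : ncpoly F) (X Y : M) (a b : M * M) : F :=
  \sum_(t <- P) t.1 * \tr (eval_word X Y [:: a; b] t.2).
Definition Psi2 (P : ncpoly F) (X Y : M) (a b : M * M) : F :=
  (psi_form2 P X Y a b - psi_form2 P X Y b a) / 2%:R.

Definition bivector_nondegenerate (pi : M * M -> M * M -> F) : Prop :=
  forall a : M * M, (forall b, pi a b = 0) -> a = (0, 0).
Definition inverse_form (pi : M * M -> M * M -> F) (omega : M * M -> M * M -> F) : Prop :=
  forall (a u : M * M), (forall g : M * M, pairing g u = pi a g) ->
    forall v : M * M, omega u v = pairing a v.

Definition dinv (S dS : M) : M := - (invmx S *m dS *m invmx S).
Definition dS (eps : F) (X Y : M) (u : M * M) : M := dinv Y u.2 - eps *: u.1.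
Definition dF (eps : F) (X Y : M) (u : M * M) : M :=
  dinv (invmx Y - eps *: X) (dS eps X Y u).
Definition dG (eps : F) (X Y : M) (u : M * M) : M :=
  u.1 *m (invmx Y - eps *: X) + X *m dS eps X Y u.
Definition omega_eps (eps : F) (X Y : M) (u v : M * M) : F :=
  \tr (dF eps X Y u *m dG eps X Y v) - \tr (dF eps X Y v *m dG eps X Y u).

End Rep.

Section Sharp.
Variables (F : fieldType) (k : nat) (eps : F) (X Y : 'M[F]_k).
Local Notation Pi_eps := (ncadd (Pi0 F) (ncscale eps (Pi_inf F))).

Definition Pi_eps_sharp (a : 'M[F]_k * 'M[F]_k) : 'M[F]_k * 'M[F]_k :=
  (X *m a.1 - a.1 *m X - a.2 *m Y + eps *: (Y *m a.2 *m Y *m X),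
   Y *m a.1 + eps *: (Y *m a.2 *m Y *m Y - Y *m X *m a.1 *m Y - Y *m Y *m a.2 *m Y)).

Lemma psi_form2_Pi_eps a g : psi_form2 Pi_eps X Y a g = pairing g (Pi_eps_sharp a).
Proof.
case: a g => [A B] [G H].
rewrite /psi_form2 /pairing /= !big_cons big_nil /= !mulmx1.
mx_expand; mxtrace_expand; rotate_traces_to_end G H; ring.
Qed.

Lemma psi_form2_Pi_eps_swap a g :
  psi_form2 Pi_eps X Y g a = - pairing g (Pi_eps_sharp a).
Proof.
case: a g => [A B] [G H].
rewrite /psi_form2 /pairing /= !big_cons big_nil /= !mulmx1.
mx_expand; mxtrace_expand; rotate_traces_to_end G H; ring.
Qed.

Lemma Psi2_Pi_eps a g : (2%:R : F) != 0 ->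
  Psi2 Pi_eps X Y a g = pairing g (Pi_eps_sharp a).
Proof.
move=> two_neq0.
by rewrite /Psi2 psi_form2_Pi_eps psi_form2_Pi_eps_swap opprK; field.
Qed.

Lemma omega_eps0l v : omega_eps eps X Y (0, 0) v = 0.
Proof.
rewrite /omega_eps /dF /dG /dS /dinv /=.
by rewrite !(mulmx0, mul0mx, scaler0, subr0, oppr0, addr0, mxtrace0, subrr).
Qed.

Section Inverse.
Hypotheses (Y_unit : Y \in unitmx) (S_unit : invmx Y - eps *: X \in unitmx).
Local Notation S := (invmx Y - eps *: X).
Local Notation T := (invmx S).
Local Notation W a := (Y *m a.2 *m Y).
Local Notation R a := (a.1 - eps *: W a).

Lemma dS_sharp a : dS eps X Y (Pi_eps_sharp a) = - (R a *m S).
Proof.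
(* Pairing with an arbitrary G turns the matrix identity into one between traces,
   where ring does the bookkeeping. *)
apply: mxtrace_mull_inj => G; rewrite /dS /dinv /=.
mx_expand; rewrite ?(mulmxK Y_unit) ?(mulmxKV Y_unit); mxtrace_expand; ring.
Qed.

Lemma dF_sharp a : dF eps X Y (Pi_eps_sharp a) = T *m R a.
Proof. by rewrite /dF dS_sharp /dinv mulmxN mulNmx opprK !mulmxA (mulmxK S_unit). Qed.

Lemma dG_sharp a : dG eps X Y (Pi_eps_sharp a) = - ((R a *m X + S *m W a) *m S).
Proof.
apply: mxtrace_mull_inj => G; rewrite /dG dS_sharp /=.
mx_expand; rewrite ?(mulmxK Y_unit) ?(mulmxKV Y_unit); mxtrace_expand; ring.
Qed.

Lemma omega_eps_sharp_trace a v :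
  omega_eps eps X Y (Pi_eps_sharp a) v = \tr (R a *m v.1) - \tr (dS eps X Y v *m W a).
Proof.
rewrite /omega_eps dF_sharp dG_sharp; set E := dS eps X Y v.
have -> : dF eps X Y v = - (T *m E *m T) by [].
have -> : dG eps X Y v = v.1 *m S + X *m E by [].
have -> : \tr (T *m R a *m (v.1 *m S + X *m E))
    = \tr (R a *m v.1) + \tr (T *m R a *m X *m E).
  rewrite mulmxDr mxtraceD !mulmxA; congr (_ + _).
  by rewrite mxtrace_mulC !mulmxA (mulmxV S_unit) mul1mx.
have -> : \tr (- (T *m E *m T) *m - ((R a *m X + S *m W a) *m S))
    = \tr (T *m R a *m X *m E) + \tr (E *m W a).
  rewrite mulNmx mulmxN opprK !mulmxA mxtrace_mulC !mulmxA (mulmxV S_unit) mul1mx.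
  rewrite mulmxDr mxtraceD !mulmxA (mulmxKV S_unit); congr (_ + _).
  by rewrite [RHS]mxtrace_mulC !mulmxA.
ring.
Qed.

Lemma omega_eps_sharp a v : omega_eps eps X Y (Pi_eps_sharp a) v = pairing a v.
Proof.
case: a v => [A B] [V1 V2]; rewrite omega_eps_sharp_trace /pairing /dS /dinv /=.
mx_expand; rewrite ?(mulmxKV Y_unit); mxtrace_expand.
have -> : \tr (invmx Y *m V2 *m B *m Y) = \tr (B *m V2).
  by rewrite mxtrace_mulC !mulmxA (mulmxV Y_unit) mul1mx mxtrace_mulC.
have -> : \tr (V1 *m Y *m B *m Y) = \tr (Y *m B *m Y *m V1).
  by rewrite [RHS]mxtrace_mulC !mulmxA.
ring.
Qed.

End Inverse.

Theorem Pi_eps_symplectic :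
  (2%:R : F) != 0 -> Y \in unitmx -> invmx Y - eps *: X \in unitmx ->
  bivector_nondegenerate (Psi2 Pi_eps X Y) /\
  inverse_form (Psi2 Pi_eps X Y) (omega_eps eps X Y).
Proof.
move=> two_neq0 Y_unit S_unit; split=> [a Psi_a0 | a u Psi_u v].
  have sharp_a0 : Pi_eps_sharp a = (0, 0).
    by apply: pairing_injr => g; rewrite -Psi2_Pi_eps // Psi_a0 pairing0r.
  apply: pairing_injr => v.
  by rewrite pairingC -(omega_eps_sharp Y_unit S_unit) sharp_a0 omega_eps0l pairing0r.
have -> : u = Pi_eps_sharp a by apply: pairing_injr => g; rewrite Psi_u Psi2_Pi_eps.
exact: omega_eps_sharp.
Qed.

End Sharp.
End OverField.

Theorem mainTheorem11 (k : nat) (eps : C) (X Y : 'M[C]_k) :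
  Y \in unitmx -> (invmx Y - eps *: X) \in unitmx ->
  bivector_nondegenerate (Psi2 (ncadd Pi0 (ncscale eps Pi_inf)) X Y) /\
  inverse_form (Psi2 (ncadd Pi0 (ncscale eps Pi_inf)) X Y) (omega_eps eps X Y).
Proof.
have two_neq0 : (2%:R : C) != 0 by rewrite (Num.Theory.pnatr_eq0 (complex Rdefinitions.R)).
exact: OverField.Pi_eps_symplectic.
Qed.
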